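(* Let $F$ be a signature on a finite set $V$ that is not logsupermodular, but such that every pinning $F_p$ with $\mathrm{dom}(p)\ne\emptyset$ is logsupermodular. Then there is a configuration $x$ such that $\mathrm{supp}(F)\subseteq\{\mathbf 0,x,\overline{x},\mathbf 1\}$.
   Context: A signature on $V$ is a function $F:\{0,1\}^V\to\mathbb{R}_{\ge0}$; $\mathrm{supp}(F)=\{x:F(x)\ne0\}$. $F$ is logsupermodular if $F(x\wedge y)F(x\vee y)\ge F(x)F(y)$ for all $x,y\in\{0,1\}^V$, where $\wedge,\vee$ are coordinatewise min and max. A partial configuration $p$ is an element of $\{0,1\}^{\mathrm{dom}(p)}$, $\mathrm{dom}(p)\subseteq V$, and the pinning $F_p$ on $V\setminus\mathrm{dom}(p)$ is $F_p(x)=F(x,p)$. $\mathbf 0,\mathbf 1$ are the all-zero and all-one configurations; $\overline{x}_i=1-x_i$. *)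

From HB Require Import structures.
From mathcomp Require Import all_boot all_order all_algebra.
Set Implicit Arguments. Unset Strict Implicit. Unset Printing Implicit Defensive.
Import Order.TTheory GRing.Theory Num.Theory.
Local Open Scope ring_scope.

Definition cfg (W : finType) := {ffun W -> bool}.

Definition cmeet (W : finType) (x y : cfg W) : cfg W := [ffun i => x i && y i].
Definition cjoin (W : finType) (x y : cfg W) : cfg W := [ffun i => x i || y i].
Definition ccompl (W : finType) (x : cfg W) : cfg W := [ffun i => ~~ x i].
Definition czero (W : finType) : cfg W := [ffun => false].
Definition cone (W : finType) : cfg W := [ffun => true].

Definition signature (R : realFieldType) (W : finType) (F : cfg W -> R) :=
  forall x, 0 <= F x.

Definition logsupermodular (R : realFieldType) (W : finType) (F : cfg W -> R) :=
  forall x y : cfg W, F x * F y <= F (cmeet x y) * F (cjoin x y).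

(* Partial configuration with domain D : values p on the elements of D. *)
Notation dom_t D := {v | v \in D}.
Notation cod_t D := {v | v \notin D}.

Definition glue (V : finType) (D : {set V})
  (p : cfg (dom_t D)) (y : cfg (cod_t D)) : cfg V :=
  [ffun v => match boolP (v \in D) with
             | AltTrue h => p (exist _ v h)
             | AltFalse h => y (exist _ v h)
             end].

Definition pinning (R : realFieldType) (V : finType) (F : cfg V -> R)
  (D : {set V}) (p : cfg (dom_t D)) : cfg (cod_t D) -> R :=
  fun y => F (glue p y).

From HB Require Import structures.
From mathcomp Require Import all_boot all_order all_algebra.
From mathcomp Require Import ring.
Import Order.TTheory GRing.Theory Num.Theory.
Set Implicit Arguments. Unset Strict Implicit. Unset Printing Implicit Defensive.
Local Open Scope ring_scope.

(* Pinning a single coordinate v to a common value shows that the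
   logsupermodular inequality F u F w <= F (u /\ w) F (u \/ w) holds whenever
   u and w agree at some coordinate, i.e. whenever w <> ~u
   ([lsm_of_neq_compl]).  Hence a violating pair is necessarily of the form
   (x, ~x), and the violation reads F 0 F 1 < F x F ~x ([violation_compl]).
   For a strictly between 0 and x, the pairs (x, ~x \/ a) and (a, ~x) give
     F x F (~x \/ a) <= F a F 1   and   F a F ~x <= F 0 F (~x \/ a),
   whose product contradicts the violation as soon as a and ~x \/ a are in
   the support ([no_intermediate_support]).  For z in the support and
   a := z /\ x, the pairs (z, x) and (z, ~x) put a and ~x \/ a = z \/ ~x in
   the support unless a is 0 or x ([meet_trivial]).  So z /\ x and,
   symmetrically, z /\ ~x are trivial, and z = (z /\ x) \/ (z /\ ~x) is one
   of 0, x, ~x, 1. *)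

Section ConfigurationLattice.
Variable V : finType.
Implicit Types x y z : cfg V.

Lemma ccomplK x : ccompl (ccompl x) = x.
Proof. by apply/ffunP=> v; rewrite !ffunE negbK. Qed.

Lemma cmeet_compl x : cmeet x (ccompl x) = czero V.
Proof. by apply/ffunP=> v; rewrite !ffunE andbN. Qed.

Lemma cjoin_compl x : cjoin x (ccompl x) = cone V.
Proof. by apply/ffunP=> v; rewrite !ffunE orbN. Qed.

Lemma cjoin_meet_split z x : cjoin (cmeet z x) (cmeet z (ccompl x)) = z.
Proof. by apply/ffunP=> v; rewrite !ffunE; case: (z v); case: (x v). Qed.

Lemma agree_of_neq_compl x y : x != ccompl y -> exists v, x v = y v.
Proof.
move=> xy; suff /existsP[v /eqP] : [exists v, x v == y v] by exists v.
apply: contraNT xy => /existsPn xy; apply/eqP/ffunP=> v; rewrite ffunE.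
by move: (xy v); case: (x v); case: (y v).
Qed.

End ConfigurationLattice.

Section Restriction.
Variables (V : finType) (D : {set V}).

Definition restrict (t : cfg V) : cfg (cod_t D) := [ffun i => t (val i)].

Lemma restrict_meet (t s : cfg V) :
  cmeet (restrict t) (restrict s) = restrict (cmeet t s).
Proof. by apply/ffunP=> i; rewrite !ffunE. Qed.

Lemma restrict_join (t s : cfg V) :
  cjoin (restrict t) (restrict s) = restrict (cjoin t s).
Proof. by apply/ffunP=> i; rewrite !ffunE. Qed.

Lemma glue_restrict (p : cfg (dom_t D)) (t : cfg V) :
  (forall v (h : v \in D), p (exist _ v h) = t v) -> glue p (restrict t) = t.
Proof.
move=> pt; apply/ffunP=> v; rewrite ffunE.
destruct (boolP _) as [h | h].
- exact: pt.
- by rewrite ffunE.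
Qed.

End Restriction.

Section PinnedLogsupermodular.
Variables (R : realFieldType) (V : finType) (F : cfg V -> R).
Hypothesis F_ge0 : signature F.
Hypothesis pin_lsm : forall (D : {set V}) (p : cfg (dom_t D)),
  D != set0 -> logsupermodular (pinning F p).

(* Pinning the coordinate v, on which u and w agree, yields the
   logsupermodular inequality for the pair (u, w). *)
Lemma lsm_of_agree (u w : cfg V) (v : V) : u v = w v ->
  F u * F w <= F (cmeet u w) * F (cjoin u w).
Proof.
move=> uw; pose D := [set v]; pose p : cfg (dom_t D) := [ffun _ => u v].
have D_neq0 : D != set0 by apply/set0Pn; exists v; rewrite set11.
have glueK (t : cfg V) : t v = u v -> glue p (restrict D t) = t.
  move=> tv; apply: glue_restrict => i h.
  by rewrite ffunE; move: h; rewrite inE => /eqP ->.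
have := pin_lsm p D_neq0 (restrict D u) (restrict D w).
rewrite /pinning restrict_meet restrict_join.
by rewrite !glueK // !ffunE -?uw ?andbb ?orbb.
Qed.

Lemma lsm_of_neq_compl (u w : cfg V) : u != ccompl w ->
  F u * F w <= F (cmeet u w) * F (cjoin u w).
Proof. by case/agree_of_neq_compl=> v; apply: lsm_of_agree. Qed.

Lemma lsm_pos (u w : cfg V) : u != ccompl w -> 0 < F u -> 0 < F w ->
  0 < F (cmeet u w) /\ 0 < F (cjoin u w).
Proof.
move=> uw Fu Fw; apply/andP; rewrite -mulr_ge0_gt0 //.
exact: lt_le_trans (mulr_gt0 Fu Fw) (lsm_of_neq_compl uw).
Qed.

Lemma violation_compl (x y : cfg V) :
  F (cmeet x y) * F (cjoin x y) < F x * F y -> y = ccompl x.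
Proof.
move=> xy; apply/eqP; apply: contraTT xy => yx.
rewrite -leNgt; apply: lsm_of_neq_compl.
by apply: contraNneq yx => ->; rewrite ccomplK.
Qed.

(* A configuration a strictly between 0 and x, such that a and ~x \/ a are in
   the support, forbids the violation F 0 F 1 < F x F ~x: the pairs
   (x, ~x \/ a) and (a, ~x) are not complementary, and the product of their
   logsupermodular inequalities is F x F ~x <= F 0 F 1 up to the positive
   factor F a F (~x \/ a). *)
Lemma no_intermediate_support (x a : cfg V) :
  cmeet a x = a -> a != czero V -> a != x ->
  0 < F a -> 0 < F (cjoin (ccompl x) a) ->
  F x * F (ccompl x) <= F (czero V) * F (cone V).
Proof.
move=> a_le_x a_neq0 a_neq_x Fa_gt0 FJ_gt0; set J := cjoin (ccompl x) a.
have ax v : a v && x v = a v by rewrite -{2}a_le_x ffunE.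
have meet_xJ : cmeet x J = a.
  by apply/ffunP=> v; rewrite !ffunE; move: (ax v); case: (a v); case: (x v).
have xJ : F x * F J <= F a * F (cone V).
  have join_xJ : cjoin x J = cone V.
    by apply/ffunP=> v; rewrite !ffunE; case: (a v); case: (x v).
  rewrite -meet_xJ -join_xJ; apply: lsm_of_neq_compl.
  apply: contraNneq a_neq0 => xJc; rewrite -meet_xJ xJc.
  by apply/eqP/ffunP=> v; rewrite !ffunE andNb.
have anx : F a * F (ccompl x) <= F (czero V) * F J.
  have meet_anx : cmeet a (ccompl x) = czero V.
    by apply/ffunP=> v; rewrite !ffunE; move: (ax v); case: (a v); case: (x v).
  have join_anx : cjoin a (ccompl x) = J.
    by apply/ffunP=> v; rewrite !ffunE orbC.
  by rewrite -meet_anx -join_anx; apply: lsm_of_neq_compl; rewrite ccomplK.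
have Fx_ge0 := F_ge0 x; have Fnx_ge0 := F_ge0 (ccompl x).
rewrite -(ler_pM2r (mulr_gt0 Fa_gt0 FJ_gt0)).
have := ler_pM (mulr_ge0 Fx_ge0 (ltW FJ_gt0))
  (mulr_ge0 (ltW Fa_gt0) Fnx_ge0) xJ anx.
by congr (_ <= _); ring.
Qed.

(* If (x, ~x) violates logsupermodularity, then every z in the support
   meets x trivially: a := z /\ x and ~x \/ a = z \/ ~x lie in the support
   unless a is 0 or x. *)
Lemma meet_trivial (x z : cfg V) :
  F (czero V) * F (cone V) < F x * F (ccompl x) -> 0 < F z ->
  cmeet z x = czero V \/ cmeet z x = x.
Proof.
move=> Fx Fz; set a := cmeet z x.
have /andP[Fx_gt0 Fnx_gt0] : (0 < F x) && (0 < F (ccompl x)).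
  by rewrite -mulr_ge0_gt0 //; apply: le_lt_trans Fx; rewrite mulr_ge0.
have [a0 | a_neq0] := eqVneq a (czero V); [by left | right].
apply/eqP; apply: contraTT Fx => a_neq_x; rewrite -leNgt.
have [Fa_gt0 _] : 0 < F a /\ 0 < F (cjoin z x).
  apply: lsm_pos => //; apply: contraNneq a_neq0 => zx.
  by rewrite /a zx; apply/eqP/ffunP=> v; rewrite !ffunE andNb.
have [_ FJ_gt0] : 0 < F (cmeet z (ccompl x)) /\ 0 < F (cjoin z (ccompl x)).
  apply: lsm_pos => //; rewrite ccomplK; apply: contraNneq a_neq_x => zx.
  by rewrite /a zx; apply/eqP/ffunP=> v; rewrite !ffunE andbb.
apply: no_intermediate_support a_neq0 a_neq_x Fa_gt0 _.
- by apply/ffunP=> v; rewrite !ffunE -andbA andbb.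
- suff -> : cjoin (ccompl x) a = cjoin z (ccompl x) by [].
  by apply/ffunP=> v; rewrite !ffunE; case: (z v); case: (x v).
Qed.

End PinnedLogsupermodular.

Theorem mainTheorem8 (R : realFieldType) (V : finType) (F : cfg V -> R) :
  signature F ->
  ~ logsupermodular F ->
  (forall (D : {set V}) (p : cfg (dom_t D)),
      D != set0 -> logsupermodular (pinning F p)) ->
  exists x : cfg V, forall y : cfg V, F y != 0 ->
    [|| y == czero V, y == x, y == ccompl x | y == cone V].
Proof.
move=> F_ge0 not_lsm pin_lsm.
have /existsP[x /existsP[y Fxy]] :
    [exists x, exists y, F (cmeet x y) * F (cjoin x y) < F x * F y].
  apply: contraT => /existsPn none; case: not_lsm => x y.
  by move/existsPn: (none x) => /(_ y); rewrite -leNgt.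
have y_compl := violation_compl pin_lsm Fxy; subst y.
move: Fxy; rewrite cmeet_compl cjoin_compl => Fx.
have Fnx : F (czero V) * F (cone V) < F (ccompl x) * F (ccompl (ccompl x)).
  by rewrite ccomplK [F (ccompl x) * _]mulrC.
exists x => z Fz_neq0; have Fz : 0 < F z by rewrite lt0r Fz_neq0 F_ge0.
rewrite -(cjoin_meet_split z x).
have [-> | ->] := meet_trivial F_ge0 pin_lsm Fx Fz;
  have [-> | ->] := meet_trivial F_ge0 pin_lsm Fnx Fz; apply/or4P.
- by constructor 1; apply/eqP/ffunP=> v; rewrite !ffunE.
- by constructor 3; apply/eqP/ffunP=> v; rewrite !ffunE.
- by constructor 2; apply/eqP/ffunP=> v; rewrite !ffunE orbF.
- by constructor 4; apply/eqP/ffunP=> v; rewrite !ffunE orbN.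
Qed.
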